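(* Let $d\ge0$ and let $L:\mathbb{C}_{2d+2}[z,\overline z]\to\mathbb{C}$ be a real linear functional which is non-negative on all real squares, i.e. $L(|f|^2)\ge0$ for all $f\in\mathbb{C}_{d+1}[z,\overline z]$, and which is strictly positive on hermitian squares of bidegree at most $(d,d)$, i.e. $L(|p(z)|^2)>0$ for every nonzero $p\in\mathbb{C}_d[z]$. Let $M=\pi_dM_z|_{A_d}$ and let $\sigma_M(p,q)=\|p\|_L^2+\|Mq\|_L^2+2\Re\langle Mp,q\rangle_L$ on $A_d\oplus A_d$. The following are equivalent: (a) there exist an integer $N\le d+1$, points $a_1,\dots,a_N\in\mathbb{C}$ and weights $c_1,\dots,c_N>0$ such that $$L\big(p(z)\overline{q(z)}\big)=\sum_{k=1}^N c_k\,p(a_k)\overline{q(a_k)}$$ for all $p,q\in\mathbb{C}_{d+1}[z]$ with $\deg p+\deg q\le 2d+1$; (b) the hermitian form $\sigma_M$ is positive semidefinite on all of $A_d\oplus A_d$ (i.e. $\sigma_M$ has no negative eigenvalue, so its only possible non-positive eigenvalue is $0$).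
   Context: Notation: $\mathbb{C}_n[z]$ denotes complex polynomials in $z$ of degree $\le n$; $\mathbb{C}_n[z,\overline z]$ denotes polynomials in $z,\overline z$ of total degree $\le n$. $L$ real means $L(\overline p)=\overline{L(p)}$. $\langle p,q\rangle_L=L(p\overline q)$ and $\|p\|_L^2=L(|p|^2)$. Under the strict positivity hypothesis, $A_d=\mathbb{C}_d[z]$ is a $(d+1)$-dimensional Hilbert space with inner product $\langle\cdot,\cdot\rangle_L$; $A_{d+1}$ is the Hilbert space obtained from $\mathbb{C}_{d+1}[z]$ with the form $\langle\cdot,\cdot\rangle_L$ after quotienting by null vectors, containing $A_d$; $\pi_d$ is the orthogonal projection of $A_{d+1}$ onto $A_d$; $M_z:A_d\to A_{d+1}$ is induced by $p\mapsto zp$, so $M$ is the compression of multiplication by $z$ to $\mathbb{C}_d[z]$. *)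

(* The complex field is modelled by an arbitrary
   numClosedFieldType C (C = the complex numbers is an instance). *)
From HB Require Import structures.
From mathcomp Require Import all_boot all_order all_algebra.
Set Implicit Arguments. Unset Strict Implicit. Unset Printing Implicit Defensive.
Import Order.TTheory GRing.Theory Num.Theory.
Local Open Scope ring_scope.

Section Defs.
Variable C : numClosedFieldType.

(* A polynomial in z and zbar is an element f : {poly {poly C}} read as
   f = \sum_(i,j) f`_j`_i z^i zbar^j : the outer variable is zbar, the
   inner one is z.  A univariate p(z) : {poly C} is embedded as p%:P. *)

Definition tdeg_le (n : nat) (f : {poly {poly C}}) : Prop :=
  forall i j : nat, (n < i + j)%N -> f`_j`_i = 0.

Definition bconj (f : {poly {poly C}}) : {poly {poly C}} :=
  \poly_(j < (\max_(i < size f) size (f`_i)%R)%N) \poly_(i < size f) (f`_i`_j)^*.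

Definition ipL (L : {poly {poly C}} -> C) (p q : {poly C}) : C :=
  L (p%:P * bconj q%:P).

Definition sqnL (L : {poly {poly C}} -> C) (p : {poly C}) : C := ipL L p p.

(* M is the compression pi_d M_z |_{A_d}: for q in C_d[z], M q lies in
   C_d[z] and z q - M q is L-orthogonal to C_d[z] (orthogonal projection
   of z q in A_{d+1} onto A_d). *)
Definition is_compression (L : {poly {poly C}} -> C) (d : nat)
    (M : {poly C} -> {poly C}) : Prop :=
  forall q : {poly C}, (size q <= d.+1)%N ->
    (size (M q) <= d.+1)%N /\
    (forall r : {poly C}, (size r <= d.+1)%N -> ipL L ('X * q - M q) r = 0).

Definition sigmaM (L : {poly {poly C}} -> C) (M : {poly C} -> {poly C})
    (p q : {poly C}) : C :=
  sqnL L p + sqnL L (M q) + 2 * 'Re (ipL L (M p) q).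

End Defs.

From HB Require Import structures.
From mathcomp Require Import all_boot all_order all_algebra qpoly zify ring.
Import Order.TTheory GRing.Theory Num.Theory.
Local Open Scope ring_scope.

(* Expanding L in monomials turns <p, q>_L into a hermitian form [gram] on
   C_{d+1}[z], positive definite on A_d = C_d[z].  Writing
   P = z^(d+1) - M z^d, the monic polynomial of degree d + 1 orthogonal to
   A_d, the compression is M q = z q - q_d P, so P / (z - a) is an eigenvector
   of M for every root a of P.
   If sigma_M >= 0, testing sigma_M at (t p - a^* u, u) for an eigenvector
   M u = a u shows that u is orthogonal to the range of M - a.  This forbids
   double roots of P and makes the Lagrange polynomials P / (z - a_k)
   pairwise orthogonal, which is the quadrature at the roots of P; a
   polynomial of degree d + 1 is reduced modulo P, which is orthogonal to A_d.
   Conversely, a quadrature with at most d + 1 nodes forces z q - M q to vanish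
   at the nodes, and then sigma_M(p, q) = sum_k c_k |p(a_k) + a_k^* q(a_k)|^2. *)

Set Implicit Arguments.
Unset Strict Implicit.
Unset Printing Implicit Defensive.

Lemma poly_of_sizeE (R : nzSemiRingType) n (p : {poly R}) :
  (p \in poly_of_size n) = (size p <= n)%N.
Proof. by []. Qed.

Lemma poly_expand (R : nzRingType) n (p : {poly R}) :
  (size p <= n)%N -> p = \sum_(i < n) p`_i *: 'X^i.
Proof.
move=> hp; rewrite -poly_def; apply/polyP => k; rewrite coef_poly.
by case: ltnP => // hk; rewrite nth_default // (leq_trans hp).
Qed.

Lemma size_poly_leS_coef (R : nzRingType) n (p : {poly R}) :
  (size p <= n.+1)%N -> p`_n = 0 -> (size p <= n)%N.
Proof.
move=> /leq_sizeP hp hpn; apply/leq_sizeP => j.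
by rewrite leq_eqVlt => /orP [/eqP <- // | /hp].
Qed.

Lemma not_uniq_perm_dup (T : eqType) (s : seq T) :
  ~~ uniq s -> exists a s', perm_eq s (a :: a :: s').
Proof.
elim: s => [//|x s IH] /=; rewrite negb_and negbK => /orP [xs | /IH [a [s' hs]]].
  by exists x, (rem x s); rewrite perm_cons; apply: perm_to_rem.
exists a, (x :: s'); apply: (@perm_trans _ (x :: a :: a :: s')).
  by rewrite perm_cons.
by apply/permP => Q /=; lia.
Qed.

Lemma mulr2_Re (C : numClosedFieldType) (z : C) : 2 * 'Re z = z + z^*.
Proof. by rewrite ReE mulrC -mulrA mulVf ?mulr1 ?pnatr_eq0. Qed.

Lemma real_quadratic_ge0_eq0 (C : numClosedFieldType) (b w : C) : 0 <= b ->
  (forall t, 0 <= t * t^* * b + (t * w + (t * w)^*)) -> w = 0.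
Proof.
move=> b_ge0 hq; set s := (b + 1)^-1.
have s_gt0 : 0 < s by rewrite invr_gt0 ltr_wpDl.
have s_real : s^* = s by rewrite conj_Creal // gtr0_real.
(* t = - w^* / (b + 1): the form becomes - |w|^2 (b + 2) / (b + 1)^2. *)
have := hq (- (w^* * s)).
have -> : - (w^* * s) * (- (w^* * s))^* * b + (- (w^* * s) * w + (- (w^* * s) * w)^*)
    = s * s * - (w * w^* * (b + 2%:R)).
  rewrite !(rmorphN, rmorphM) /= conjCK s_real /s.
  by field; rewrite gt_eqF // ltr_wpDl.
rewrite pmulr_rge0 ?mulr_gt0 // oppr_ge0 pmulr_lle0 => [hle|]; last by rewrite ltr_wpDl.
by apply/eqP; rewrite -mul_conjC_eq0 eq_le hle mul_conjC_ge0.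
Qed.

Section PolyXY.
Variable C : numClosedFieldType.
Implicit Types (f : {poly {poly C}}) (p q : {poly C}).

Lemma coef_bconj f i j : (bconj f)`_j`_i = (f`_i`_j)^*.
Proof.
rewrite /bconj coef_poly; case: ifP => hj.
  rewrite coef_poly; case: ifP => // /negbT; rewrite -leqNgt.
  by move/(nth_default 0) ->; rewrite coef0 conjC0.
have : (size (f`_i)%R <= j)%N.
  case: (ltnP i (size f)) => hi; last by rewrite nth_default // size_poly0.
  have := @leq_bigmax _ (fun k : 'I_(size f) => size (f`_k)%R) (Ordinal hi).
  by move/leq_trans; apply; rewrite leqNgt hj.
by move/(nth_default 0) => ->; rewrite coef0 conjC0.
Qed.

Lemma coef_polyC_mul_bconj p q i j : (p%:P * bconj q%:P)`_j`_i = p`_i * (q`_j)^*.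
Proof.
rewrite coefCM; have -> : (bconj q%:P)`_j = (q`_j)^*%:P.
  apply/polyP => k; rewrite coef_bconj !coefC.
  by case: (k == 0%N); rewrite ?coef0 ?conjC0.
by rewrite coefMC.
Qed.

Definition monomial i j : {poly {poly C}} := ('X^i)%:P * 'X^j.

Lemma coef_monomial i j a b : (monomial i j)`_b`_a = (a == i)%:R *+ (b == j).
Proof. by rewrite /monomial coefCM coefXn mulr_natr coefMn coefXn. Qed.

Lemma bconj_monomial i j : bconj (monomial i j) = monomial j i.
Proof.
apply/polyP => b; apply/polyP => a; rewrite coef_bconj !coef_monomial.
by case: (a == j); case: (b == i); rewrite ?conjC0 ?conjC1.
Qed.

Lemma tdeg_le0 n : tdeg_le n (0 : {poly {poly C}}).
Proof. by move=> i j _; rewrite !coef0. Qed.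

Lemma tdeg_leD n f g : tdeg_le n f -> tdeg_le n g -> tdeg_le n (f + g).
Proof. by move=> hf hg i j hij; rewrite !coefD hf ?hg ?addr0. Qed.

Lemma tdeg_leCM n c f : tdeg_le n f -> tdeg_le n (c%:P%:P * f).
Proof. by move=> hf i j hij; rewrite !coefCM hf ?mulr0. Qed.

Lemma tdeg_le_sum n (I : Type) (r : seq I) (F : I -> {poly {poly C}}) :
  (forall k, tdeg_le n (F k)) -> tdeg_le n (\sum_(k <- r) F k).
Proof.
by move=> hF; elim/big_rec: _ => [|k f _]; [apply: tdeg_le0 | apply: tdeg_leD].
Qed.

Lemma tdeg_le_monomial n i j : (i + j <= n)%N -> tdeg_le n (monomial i j).
Proof.
move=> hij a b hab; rewrite coef_monomial.
case: eqP => [eb|] //; case: eqP => [ea|] //=.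
by move: hab; rewrite ea eb ltnNge hij.
Qed.

Lemma tdeg_le_coef_monomial n f i j : tdeg_le n f ->
  tdeg_le n ((f`_j`_i)%:P%:P * monomial i j).
Proof.
move=> hf; case: (leqP (i + j) n) => hij.
  by apply/tdeg_leCM/tdeg_le_monomial.
by rewrite hf // !polyC0 mul0r; apply: tdeg_le0.
Qed.

Lemma size_tdeg_le n f : tdeg_le n f ->
  (size f <= n.+1)%N /\ forall j, (size (f`_j)%R <= n.+1)%N.
Proof.
move=> hf; split.
  by apply/leq_sizeP => j hj; apply/polyP => i; rewrite coef0 hf //; lia.
by move=> j; apply/leq_sizeP => i hi; rewrite hf //; lia.
Qed.

Lemma tdeg_le_expand n f : tdeg_le n f ->
  f = \sum_(j < n.+1) \sum_(i < n.+1) (f`_j`_i)%:P%:P * monomial i j.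
Proof.
move=> /size_tdeg_le [hf hfj].
rewrite {1}(poly_expand hf); apply: eq_bigr => j _.
rewrite {1}(poly_expand (hfj j)) -mul_polyC raddf_sum mulr_suml.
by apply: eq_bigr => i _; rewrite /monomial -mul_polyC /= polyCM mulrA.
Qed.

End PolyXY.

Arguments monomial {C}.
Arguments tdeg_le0 {C}.

Section Moments.
Variables (C : numClosedFieldType) (d : nat) (L : {poly {poly C}} -> C).
Implicit Types (f : {poly {poly C}}) (p q : {poly C}).
Local Notation n := (2 * d + 2)%N.

Definition moment i j : C := if (i + j <= n)%N then L (monomial i j) else 0.

(* <p, q>_L expanded in the moments of L; unlike [ipL L] it is sesquilinear
   on all of {poly C}, and the two agree in total degree <= 2 d + 2. *)
Definition gram p q : C :=
  \sum_(j < n.+1) \sum_(i < n.+1) p`_i * (q`_j)^* * moment i j.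

Section Linear.
Hypothesis Llin : forall (a : C) f g, tdeg_le n f -> tdeg_le n g ->
  L (a%:P%:P * f + g) = a * L f + L g.

Lemma L0 : L 0 = 0.
Proof.
have := Llin 1 (tdeg_le0 n) (tdeg_le0 n).
rewrite mulr0 add0r mul1r => /eqP.
by rewrite -subr_eq0 opprD addrA subrr add0r oppr_eq0 => /eqP.
Qed.

Lemma LZ c f : tdeg_le n f -> L (c%:P%:P * f) = c * L f.
Proof. by move=> hf; have := Llin c hf (tdeg_le0 n); rewrite !addr0 L0 addr0. Qed.

Lemma LD f g : tdeg_le n f -> tdeg_le n g -> L (f + g) = L f + L g.
Proof. by move=> hf hg; have := Llin 1 hf hg; rewrite !polyC1 !mul1r. Qed.

Lemma L_sum (I : Type) (r : seq I) (F : I -> {poly {poly C}}) :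
  (forall k, tdeg_le n (F k)) -> L (\sum_(k <- r) F k) = \sum_(k <- r) L (F k).
Proof.
move=> hF; elim: r => [|x r IH]; first by rewrite !big_nil L0.
by rewrite !big_cons LD ?IH //; apply: tdeg_le_sum.
Qed.

Lemma ipL_gram p q :
  (size p + size q <= n + 2)%N -> ipL L p q = gram p q.
Proof.
move=> hpq; have tdeg_ipL : tdeg_le n (p%:P * bconj q%:P).
  move=> i j hij; rewrite coef_polyC_mul_bconj.
  case: (ltnP i (size p)) => hi; last by rewrite nth_default // mul0r.
  case: (ltnP j (size q)) => hj; last by rewrite (nth_default 0 hj) conjC0 mulr0.
  by lia.
have L_term i j : L (((p%:P * bconj q%:P)`_j`_i)%:P%:P * monomial i j) =
    (p%:P * bconj q%:P)`_j`_i * moment i j.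
  rewrite /moment; case: leqP => hij; first exact/LZ/tdeg_le_monomial.
  by rewrite tdeg_ipL // !polyC0 !mul0r L0.
rewrite /ipL {1}(tdeg_le_expand tdeg_ipL) L_sum //; last first.
  by move=> j; apply: tdeg_le_sum => i; apply: tdeg_le_coef_monomial.
apply: eq_bigr => j _; rewrite L_sum; last by move=> i; apply: tdeg_le_coef_monomial.
by apply: eq_bigr => i _; rewrite L_term coef_polyC_mul_bconj.
Qed.

End Linear.

Lemma gramDl p p' q : gram (p + p') q = gram p q + gram p' q.
Proof.
rewrite /gram -big_split; apply: eq_bigr => j _; rewrite -big_split.
by apply: eq_bigr => i _; rewrite coefD !mulrDl.
Qed.

Lemma gramZl c p q : gram (c *: p) q = c * gram p q.
Proof.
rewrite /gram mulr_sumr; apply: eq_bigr => j _; rewrite mulr_sumr.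
by apply: eq_bigr => i _; rewrite coefZ !mulrA.
Qed.

Lemma gram0l q : gram 0 q = 0.
Proof. by have := gramZl 0 0 q; rewrite scale0r mul0r. Qed.

Lemma gramNl p q : gram (- p) q = - gram p q.
Proof. by rewrite -scaleN1r gramZl mulN1r. Qed.

Lemma gramBl p p' q : gram (p - p') q = gram p q - gram p' q.
Proof. by rewrite gramDl gramNl. Qed.

Lemma gram_suml (I : Type) (r : seq I) (F : I -> {poly C}) q :
  gram (\sum_(k <- r) F k) q = \sum_(k <- r) gram (F k) q.
Proof.
elim: r => [|x r IH]; first by rewrite !big_nil gram0l.
by rewrite !big_cons gramDl IH.
Qed.

Section Real.
Hypothesis Lreal : forall f, tdeg_le n f -> L (bconj f) = (L f)^*.

Lemma moment_conj i j : moment j i = (moment i j)^*.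
Proof.
rewrite /moment addnC; case: leqP => hij; last by rewrite conjC0.
by rewrite -Lreal ?bconj_monomial //; apply: tdeg_le_monomial.
Qed.

Lemma gram_conj p q : gram q p = (gram p q)^*.
Proof.
rewrite /gram rmorph_sum exchange_big /=; apply: eq_bigr => j _.
rewrite rmorph_sum; apply: eq_bigr => i _.
by rewrite !rmorphM /= conjCK -moment_conj (mulrC q`_j).
Qed.

Lemma gramDr p q q' : gram p (q + q') = gram p q + gram p q'.
Proof. by rewrite gram_conj gramDl rmorphD /= -!gram_conj. Qed.

Lemma gramZr c p q : gram p (c *: q) = c^* * gram p q.
Proof. by rewrite gram_conj gramZl rmorphM /= -!gram_conj. Qed.

Lemma gramNr p q : gram p (- q) = - gram p q.
Proof. by rewrite -scaleN1r gramZr rmorphN1 mulN1r. Qed.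

Lemma gram_sumr (I : Type) (r : seq I) (F : I -> {poly C}) p :
  gram p (\sum_(k <- r) F k) = \sum_(k <- r) gram p (F k).
Proof.
rewrite gram_conj gram_suml rmorph_sum /=.
by apply: eq_bigr => k _; rewrite gram_conj conjCK.
Qed.

Lemma conj_gram_diag p : (gram p p)^* = gram p p.
Proof. by rewrite -gram_conj. Qed.

End Real.

End Moments.

Section Compression.
Variables (C : numClosedFieldType) (d : nat) (L : {poly {poly C}} -> C).
Implicit Types (p q r u : {poly C}).
Hypothesis Llin : forall (a : C) (f g : {poly {poly C}}),
  tdeg_le (2 * d + 2) f -> tdeg_le (2 * d + 2) g ->
  L (a%:P%:P * f + g) = a * L f + L g.
Variable M : {poly C} -> {poly C}.
Hypothesis HM : is_compression L d M.

Local Notation gram := (gram d L).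
Local Notation Ad := (@poly_of_size C d.+1).

Lemma size_compression q : q \in Ad -> M q \in Ad.
Proof. by move=> hq; case: (HM hq). Qed.

Lemma size_compression_defect q : q \in Ad -> 'X * q - M q \in poly_of_size d.+2.
Proof.
move=> hq; have hMq := size_compression hq; rewrite !poly_of_sizeE in hq hMq *.
rewrite (leq_trans (size_polyD _ _)) // geq_max size_polyN (leq_trans hMq) // andbT.
by rewrite (leq_trans (size_polyMleq _ _)) // size_polyX; lia.
Qed.

Lemma gram_compression_defect q r : q \in Ad -> r \in Ad ->
  gram ('X * q - M q) r = 0.
Proof.
move=> hq hr; have [_ orth] := HM hq; rewrite -(orth r hr) (ipL_gram Llin) //.
by move: (size_compression_defect hq) hr; rewrite !poly_of_sizeE; lia.
Qed.

Lemma sigmaM_gram p q : p \in Ad -> q \in Ad ->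
  sigmaM L M p q = gram p p + gram (M q) (M q) + (gram (M p) q + (gram (M p) q)^*).
Proof.
move=> hp hq; have hMp := size_compression hp; have hMq := size_compression hq.
rewrite !poly_of_sizeE in hp hq hMp hMq.
by rewrite /sigmaM /sqnL mulr2_Re !(ipL_gram Llin) //; lia.
Qed.

Section OrthPoly.
Hypothesis Lreal : forall f : {poly {poly C}}, tdeg_le (2 * d + 2) f ->
  L (bconj f) = (L f)^*.
Hypothesis Lstrict : forall p, (size p <= d.+1)%N -> p != 0 ->
  0 < L (p%:P * bconj p%:P).

Lemma gram_gt0 p : p \in Ad -> p != 0 -> 0 < gram p p.
Proof.
move=> hp p_neq0; rewrite -(ipL_gram Llin); first exact: Lstrict hp p_neq0.
by move: hp; rewrite poly_of_sizeE; lia.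
Qed.

Lemma gram_ge0 p : p \in Ad -> 0 <= gram p p.
Proof.
move=> hp; have [->|p_neq0] := eqVneq p 0; first by rewrite gram0l.
exact/ltW/gram_gt0.
Qed.

Lemma gram_eq0 p : p \in Ad -> gram p p = 0 -> p = 0.
Proof.
move=> hp gpp; apply/eqP/negPn/negP => p_neq0.
by have := gram_gt0 hp p_neq0; rewrite gpp ltxx.
Qed.

Definition orth_poly : {poly C} := 'X^(d.+1) - M 'X^d.

Lemma Xn_Ad : 'X^d \in Ad.
Proof. by rewrite poly_of_sizeE size_polyXn. Qed.

Lemma gram_orth_poly r : r \in Ad -> gram orth_poly r = 0.
Proof. by move=> hr; rewrite /orth_poly exprS gram_compression_defect ?Xn_Ad. Qed.

Lemma gram_orth_poly_r r : r \in Ad -> gram r orth_poly = 0.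
Proof. by move=> hr; rewrite (gram_conj Lreal) gram_orth_poly // conjC0. Qed.

Lemma size_orth_poly : size orth_poly = d.+2.
Proof.
have := size_compression Xn_Ad; rewrite poly_of_sizeE => hM.
by rewrite /orth_poly size_polyDl size_polyXn // size_polyN ltnS.
Qed.

Lemma orth_poly_monic : orth_poly \is monic.
Proof.
have := size_compression Xn_Ad; rewrite poly_of_sizeE => hM.
by rewrite monicE /orth_poly lead_coefDl ?lead_coefXn // size_polyN size_polyXn ltnS.
Qed.

Lemma coef_orth_poly_top : orth_poly`_d.+1 = 1.
Proof.
by have := orth_poly_monic; rewrite monicE lead_coefE size_orth_poly => /eqP.
Qed.

Lemma orth_poly_Ad2 : orth_poly \in poly_of_size d.+2.
Proof. by rewrite poly_of_sizeE size_orth_poly. Qed.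

Lemma reduce_orth_poly_Ad p : (size p <= d.+2)%N -> p - p`_d.+1 *: orth_poly \in Ad.
Proof.
move=> hp; have small : p - p`_d.+1 *: orth_poly \in poly_of_size d.+2.
  by rewrite rpredB ?rpredZ ?orth_poly_Ad2.
apply: (size_poly_leS_coef small).
by rewrite coefB coefZ coef_orth_poly_top mulr1 subrr.
Qed.

Lemma compressionE q : q \in Ad -> M q = 'X * q - q`_d *: orth_poly.
Proof.
move=> hq; set e := 'X * q - M q - q`_d *: orth_poly.
have small : e \in poly_of_size d.+2.
  by rewrite rpredB ?rpredZ ?orth_poly_Ad2 ?size_compression_defect.
have e_top : e`_d.+1 = 0.
  have Mq_top : (M q)`_d.+1 = 0 by rewrite nth_default //; apply: size_compression.
  by rewrite /e !coefB coefZ coef_orth_poly_top coefXM /= Mq_top mulr1 subr0 subrr.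
have e_Ad : e \in Ad := size_poly_leS_coef small e_top.
have /(gram_eq0 e_Ad)/eqP : gram e e = 0.
  rewrite {1}/e gramBl gramZl gram_compression_defect //.
  by rewrite gram_orth_poly // mulr0 subr0.
rewrite subr_eq0 => /eqP <-.
by rewrite opprB addrC subrK.
Qed.

Lemma compressionB t s p u : p \in Ad -> u \in Ad ->
  M (t *: p - s *: u) = t *: M p - s *: M u.
Proof.
move=> hp hu; rewrite !compressionE ?rpredB ?rpredZ // coefB !coefZ.
by rewrite -!mul_polyC polyCB !polyCM; ring.
Qed.

Lemma sigmaM_eigen_shift p u a t : p \in Ad -> u \in Ad -> M u = a *: u ->
  sigmaM L M (t *: p - a^* *: u) u =
  t * t^* * gram p p + (t * gram (M p - a *: p) u + (t * gram (M p - a *: p) u)^*).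
Proof.
move=> hp hu hMu; rewrite sigmaM_gram ?rpredB ?rpredZ // compressionB // hMu.
rewrite !(gramDl, gramNl, gramZl, gramDr Lreal, gramNr Lreal, gramZr Lreal).
rewrite !(rmorphN, rmorphM, rmorphD) /= ?conjCK ?(conj_gram_diag Lreal).
by rewrite [gram u p](gram_conj Lreal) ?conjCK; ring.
Qed.

Section Quadrature.
Hypothesis sigmaM_ge0 : forall p q, p \in Ad -> q \in Ad -> 0 <= sigmaM L M p q.

Lemma gram_eigen_orth u a : u \in Ad -> M u = a *: u ->
  forall p, p \in Ad -> gram (M p - a *: p) u = 0.
Proof.
move=> hu hMu p hp; apply: (real_quadratic_ge0_eq0 (gram_ge0 hp)) => t.
by rewrite -sigmaM_eigen_shift // sigmaM_ge0 ?rpredB ?rpredZ.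
Qed.

(* If a were a double root, u = P / (z - a) would be an eigenvector lying in
   the range of M - a, hence orthogonal to itself. *)
Lemma orth_poly_simple_root a s :
  orth_poly != ('X - a%:P) * (('X - a%:P) * \prod_(z <- s) ('X - z%:P)).
Proof.
set R := \prod_(z <- s) _; set u := ('X - a%:P) * R; apply/eqP => P_factor.
have u_prod : u = \prod_(z <- a :: s) ('X - z%:P) by rewrite big_cons.
have size_s : (size s).+2 = d.+1.
  have P_prod : orth_poly = \prod_(z <- a :: a :: s) ('X - z%:P).
    by rewrite P_factor !big_cons.
  by have := size_orth_poly; rewrite P_prod size_prod_XsubC /=; lia.
have size_u : size u = d.+1 by rewrite u_prod size_prod_XsubC.
have u_Ad : u \in Ad by rewrite poly_of_sizeE size_u.
have R_Ad : R \in Ad by rewrite poly_of_sizeE size_prod_XsubC -size_s.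
have R_top : R`_d = 0 by rewrite nth_default // size_prod_XsubC; lia.
have u_top : u`_d = 1.
  have : u \is monic by rewrite u_prod monic_prod_XsubC.
  by rewrite monicE lead_coefE size_u => /eqP.
have Mu : M u = a *: u.
  by rewrite compressionE // u_top scale1r P_factor -!mul_polyC; ring.
have := gram_eigen_orth u_Ad Mu R_Ad.
have -> : M R - a *: R = u.
  by rewrite compressionE // R_top scale0r subr0 -mul_polyC /u; ring.
move/(gram_eq0 u_Ad)/eqP; apply/negP.
by rewrite -size_poly_gt0 size_u.
Qed.

Lemma orth_poly_roots : exists rs,
  [/\ uniq rs, size rs = d.+1 & orth_poly = \prod_(z <- rs) ('X - z%:P)].
Proof.
have [rs P_rs] := closed_field_poly_normal orth_poly.
rewrite (eqP orth_poly_monic) scale1r in P_rs.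
have size_rs : size rs = d.+1.
  by have := size_orth_poly; rewrite P_rs size_prod_XsubC; lia.
exists rs; split=> //; apply/negPn/negP => /not_uniq_perm_dup [a [s rs_perm]].
have /eqP := orth_poly_simple_root a s; apply.
by rewrite P_rs (perm_big _ rs_perm) !big_cons.
Qed.

Section Nodes.
Variable rs : seq C.
Hypotheses (rs_uniq : uniq rs) (size_rs : size rs = d.+1).
Hypothesis orth_polyE : orth_poly = \prod_(z <- rs) ('X - z%:P).

Definition node (k : 'I_d.+1) : C := rs`_k.

Definition basis_poly (k : 'I_d.+1) : {poly C} :=
  \prod_(j < d.+1 | j != k) ('X - (node j)%:P).

Lemma orth_poly_basis k : orth_poly = ('X - (node k)%:P) * basis_poly k.
Proof. by rewrite orth_polyE (big_nth 0) size_rs big_mkord (bigD1 k). Qed.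

Lemma orth_poly_node k : orth_poly.[node k] = 0.
Proof. by rewrite (orth_poly_basis k) hornerM hornerXsubC subrr mul0r. Qed.

Lemma node_inj j k : j != k -> node j != node k.
Proof. by move=> hjk; rewrite /node nth_uniq ?size_rs. Qed.

Lemma basis_poly_node_neq j k : j != k -> (basis_poly k).[node j] = 0.
Proof.
by move=> hjk; rewrite /basis_poly (bigD1 j) //= hornerM hornerXsubC subrr mul0r.
Qed.

Lemma basis_poly_node_neq0 k : (basis_poly k).[node k] != 0.
Proof.
rewrite /basis_poly horner_prod; apply/prodf_neq0 => j hj.
by rewrite hornerXsubC subr_eq0 eq_sym node_inj.
Qed.

Lemma basis_poly_neq0 k : basis_poly k != 0.
Proof. by apply: contraNneq (basis_poly_node_neq0 k) => ->; rewrite horner0. Qed.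

Lemma size_basis_poly k : size (basis_poly k) = d.+1.
Proof.
have := size_orth_poly; rewrite (orth_poly_basis k).
by rewrite size_mul ?polyXsubC_eq0 ?basis_poly_neq0 // size_XsubC add2n => /succn_inj.
Qed.

Lemma basis_poly_Ad k : basis_poly k \in Ad.
Proof. by rewrite poly_of_sizeE size_basis_poly. Qed.

Lemma compression_basis_poly k : M (basis_poly k) = node k *: basis_poly k.
Proof.
have top : (basis_poly k)`_d = 1.
  have := monic_prod_XsubC (index_enum 'I_d.+1) (fun j => j != k) node.
  by rewrite monicE lead_coefE -/(basis_poly k) size_basis_poly => /eqP.
rewrite compressionE ?basis_poly_Ad // top scale1r (orth_poly_basis k).
by rewrite -mul_polyC; ring.
Qed.

Lemma gram_basis_poly j k : j != k -> gram (basis_poly j) (basis_poly k) = 0.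
Proof.
move=> hjk; have := gram_eigen_orth (basis_poly_Ad k) (compression_basis_poly k)
  (basis_poly_Ad j).
rewrite compression_basis_poly -scalerBl gramZl => /eqP.
by rewrite mulf_eq0 subr_eq0 (negbTE (node_inj hjk)) => /eqP.
Qed.

Lemma lagrange_interpolation p : p \in Ad ->
  p = \sum_(k < d.+1) (p.[node k] / (basis_poly k).[node k]) *: basis_poly k.
Proof.
move=> hp; apply/eqP; rewrite -subr_eq0; apply/eqP; set e := _ - _.
have e_Ad : e \in Ad.
  by rewrite rpredB // rpred_sum // => k _; rewrite rpredZ ?basis_poly_Ad.
have e_node j : e.[node j] = 0.
  rewrite /e hornerD hornerN horner_sum (bigD1 j) //= big1 ?addr0.
    by rewrite hornerZ divfK ?subrr // basis_poly_node_neq0.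
  by move=> k; rewrite eq_sym => hjk; rewrite hornerZ (basis_poly_node_neq hjk) mulr0.
apply/eqP/negPn/negP => e_neq0.
have : (size rs < size e)%N.
  apply: (max_poly_roots e_neq0 _ rs_uniq); apply/allP => z z_rs.
  have hz : (index z rs < d.+1)%N by rewrite -size_rs index_mem.
  by apply/eqP; have := e_node (Ordinal hz); rewrite /node /= nth_index.
by move: e_Ad; rewrite poly_of_sizeE size_rs ltnNge => ->.
Qed.

Definition weight (k : 'I_d.+1) : C :=
  gram (basis_poly k) (basis_poly k) /
    ((basis_poly k).[node k] * ((basis_poly k).[node k])^*).

Lemma weight_gt0 k : 0 < weight k.
Proof.
apply: divr_gt0; first exact: gram_gt0 (basis_poly_Ad k) (basis_poly_neq0 k).
by rewrite mul_conjC_gt0 basis_poly_node_neq0.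
Qed.

Lemma gram_quadrature p q : p \in Ad -> q \in Ad ->
  gram p q = \sum_(k < d.+1) weight k * p.[node k] * (q.[node k])^*.
Proof.
move=> hp hq; rewrite {1}(lagrange_interpolation hp) {1}(lagrange_interpolation hq).
rewrite gram_suml; apply: eq_bigr => k _.
rewrite gramZl (gram_sumr Lreal) (bigD1 k) //= big1 ?addr0; last first.
  by move=> j hjk; rewrite (gramZr Lreal) gram_basis_poly ?mulr0 // eq_sym.
rewrite (gramZr Lreal) /weight fmorph_div /=.
have hk := basis_poly_node_neq0 k.
have hk' : ((basis_poly k).[node k])^* != 0 by rewrite conjC_eq0.
by field; rewrite hk hk'.
Qed.

(* Degree d + 1 is reduced modulo P, which is orthogonal to A_d and vanishes
   at the nodes. *)
Lemma gram_quadrature_ext p q : (size p <= d.+2)%N -> (size q <= d.+2)%N ->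
  ((size p).-1 + (size q).-1 <= 2 * d + 1)%N ->
  gram p q = \sum_(k < d.+1) weight k * p.[node k] * (q.[node k])^*.
Proof.
move=> hp hq hpq.
have reduce_node r k : (r - r`_d.+1 *: orth_poly).[node k] = r.[node k].
  by rewrite hornerD hornerN hornerZ orth_poly_node mulr0 subr0.
have [p_Ad | p_big] := leqP (size p) d.+1.
  rewrite -{1}(subrK (q`_d.+1 *: orth_poly) q) (gramDr Lreal) (gramZr Lreal).
  rewrite gram_orth_poly_r // mulr0 addr0.
  rewrite (gram_quadrature p_Ad (reduce_orth_poly_Ad hq)).
  by apply: eq_bigr => k _; rewrite reduce_node.
have q_Ad : (size q <= d.+1)%N by lia.
rewrite -{1}(subrK (p`_d.+1 *: orth_poly) p) gramDl gramZl gram_orth_poly // mulr0.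
rewrite addr0 (gram_quadrature (reduce_orth_poly_Ad hp) q_Ad).
by apply: eq_bigr => k _; rewrite reduce_node.
Qed.

End Nodes.

Lemma quadrature_of_sigmaM_ge0 : exists (N : nat) (a c : 'I_N -> C),
  (N <= d.+1)%N /\ (forall k, 0 < c k) /\
  forall p q, (size p <= d.+2)%N -> (size q <= d.+2)%N ->
    ((size p).-1 + (size q).-1 <= 2 * d + 1)%N ->
    L (p%:P * bconj q%:P) = \sum_(k < N) c k * p.[a k] * (q.[a k])^*.
Proof.
have [rs [rs_uniq size_rs P_rs]] := orth_poly_roots.
exists d.+1, (node rs), (weight rs); split=> //; split=> [k|p q hp hq hpq].
  exact: weight_gt0.
rewrite -/(ipL L p q) (ipL_gram Llin); last by lia.
exact: gram_quadrature_ext.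
Qed.

End Quadrature.

End OrthPoly.

Section Converse.
Variables (N : nat) (a c : 'I_N -> C).
Hypotheses (N_le : (N <= d.+1)%N) (c_gt0 : forall k, 0 < c k).
Hypothesis quadrature : forall p q, (size p <= d.+2)%N -> (size q <= d.+2)%N ->
  ((size p).-1 + (size q).-1 <= 2 * d + 1)%N ->
  L (p%:P * bconj q%:P) = \sum_(k < N) c k * p.[a k] * (q.[a k])^*.

Lemma gram_nodes p q : (size p <= d.+2)%N -> (size q <= d.+2)%N ->
  ((size p).-1 + (size q).-1 <= 2 * d + 1)%N ->
  gram p q = \sum_(k < N) c k * p.[a k] * (q.[a k])^*.
Proof.
by move=> hp hq hpq; rewrite -quadrature // -/(ipL L p q) (ipL_gram Llin) //; lia.
Qed.

(* z q - M q is orthogonal to A_d, and so is its remainder modulo the node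
   polynomial, which has degree N <= d + 1 and the same values at the nodes. *)
Lemma compression_defect_node q k : q \in Ad -> ('X * q - M q).[a k] = 0.
Proof.
move=> hq; set g := 'X * q - M q.
set Pi := \prod_(z <- [seq a j | j <- enum 'I_N]) ('X - z%:P).
have Pi_neq0 : Pi != 0 by rewrite -size_poly_gt0 size_prod_XsubC.
have g_mod_Ad : (size (g %% Pi)%R <= d.+1)%N.
  have := ltn_modpN0 g Pi_neq0; rewrite size_prod_XsubC size_map size_enum_ord.
  by lia.
have g_mod_node j : (g %% Pi).[a j] = g.[a j].
  by apply: horner_mod; rewrite root_prod_XsubC map_f ?mem_enum.
have := gram_compression_defect hq g_mod_Ad; rewrite -/g gram_nodes //; first last.
- move: (size_compression_defect hq) g_mod_Ad; rewrite poly_of_sizeE -/g.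
  by move: (size g) (size (g %% Pi)) => m n; lia.
- exact: leq_trans g_mod_Ad _.
- exact: size_compression_defect.
under eq_bigr => j _ do rewrite g_mod_node -mulrA.
have terms_ge0 (j : 'I_N) : true -> 0 <= c j * (g.[a j] * (g.[a j])^*).
  by move=> _; exact: mulr_ge0 (ltW (c_gt0 j)) (mul_conjC_ge0 _).
move/(psumr_eq0P terms_ge0)/(_ k isT)/eqP.
by rewrite mulf_eq0 gt_eqF //= mul_conjC_eq0 => /eqP.
Qed.

Lemma sigmaM_ge0_of_quadrature p q : p \in Ad -> q \in Ad -> 0 <= sigmaM L M p q.
Proof.
move=> hp hq; have hMq := size_compression hq; rewrite sigmaM_gram //.
have Mp_Xp : gram (M p) q = gram ('X * p) q.
  by apply/eqP; rewrite eq_sym -subr_eq0 -gramBl gram_compression_defect.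
have size_Xp : (size ('X * p)%R <= d.+2)%N.
  rewrite (leq_trans (size_polyMleq _ _)) // size_polyX.
  by move: hp; rewrite poly_of_sizeE.
rewrite Mp_Xp !gram_nodes; try by move: hp hq hMq size_Xp; rewrite !poly_of_sizeE; lia.
rewrite rmorph_sum -!big_split /=; apply: sumr_ge0 => k _.
have node_Mq : (M q).[a k] = a k * q.[a k].
  have /eqP := compression_defect_node k hq.
  by rewrite hornerD hornerN hornerM hornerX subr_eq0 => /eqP <-.
have c_real : (c k)^* = c k by rewrite conj_Creal // gtr0_real.
rewrite node_Mq hornerM hornerX.
have -> : c k * p.[a k] * (p.[a k])^* + c k * (a k * q.[a k]) * (a k * q.[a k])^* +
    (c k * (a k * p.[a k]) * (q.[a k])^* + (c k * (a k * p.[a k]) * (q.[a k])^*)^*)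
  = c k * ((p.[a k] + (a k)^* * q.[a k]) * (p.[a k] + (a k)^* * q.[a k])^*).
  by rewrite !(rmorphM, rmorphD) /= c_real !conjCK; ring.
exact: mulr_ge0 (ltW (c_gt0 k)) (mul_conjC_ge0 _).
Qed.

End Converse.

End Compression.

Unset Implicit Arguments.

Theorem theorem3 (C : numClosedFieldType) (d : nat)
  (L : {poly {poly C}} -> C)
  (* L is linear on C_{2d+2}[z, zbar] *)
  (Llin : forall (a : C) (f g : {poly {poly C}}),
     tdeg_le (2 * d + 2) f -> tdeg_le (2 * d + 2) g ->
     L (a%:P%:P * f + g) = a * L f + L g)
  (* L is real *)
  (Lreal : forall f : {poly {poly C}}, tdeg_le (2 * d + 2) f ->
     L (bconj f) = (L f)^*)
  (* L is non-negative on real squares *)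
  (Lpos : forall f : {poly {poly C}}, tdeg_le d.+1 f ->
     0 <= L (f * bconj f))
  (* L is strictly positive on hermitian squares of bidegree <= (d,d) *)
  (Lstrict : forall p : {poly C}, (size p <= d.+1)%N -> p != 0 ->
     0 < L (p%:P * bconj p%:P))
  (M : {poly C} -> {poly C}) (HM : is_compression L d M) :
  (exists (N : nat) (a : 'I_N -> C) (c : 'I_N -> C),
     (N <= d.+1)%N /\ (forall k, 0 < c k) /\
     forall p q : {poly C}, (size p <= d.+2)%N -> (size q <= d.+2)%N ->
       ((size p).-1 + (size q).-1 <= 2 * d + 1)%N ->
       L (p%:P * bconj q%:P) = \sum_(k < N) c k * p.[a k] * (q.[a k])^*)
  <->
  (forall p q : {poly C}, (size p <= d.+1)%N -> (size q <= d.+1)%N ->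
     0 <= sigmaM L M p q).
Proof.
split=> [[N [a [c [N_le [c_gt0 quadrature]]]]] p q hp hq | sigmaM_ge0].
  exact: (sigmaM_ge0_of_quadrature Llin HM N_le c_gt0 quadrature
           (p := p) (q := q) hp hq).
by apply: (quadrature_of_sigmaM_ge0 Llin HM Lreal Lstrict) => p q; apply: sigmaM_ge0.
Qed.
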